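(* Let $x_1,\dots,x_H\in\mathbb{R}^d$, $\theta_a^\star\in\mathbb{R}^d$ for $a\in\mathcal{M}=\{1,\dots,N\}$, $\alpha>0$ and $\lambda_a>0$. For $S\subseteq\mathcal{M}$ let $\mu_t(a;S):=\langle\theta_a^\star,x_t\rangle-\alpha\lambda_a\mathbf{1}\{a\notin S\}$ and $$f(S):=\sum_{t=1}^H\Bigl[\max_{a\in\mathcal{M}}\mu_t(a;S)-\max_{a\in\mathcal{M}}\mu_t(a;\emptyset)\Bigr].$$ Then $f$ is monotone non-decreasing and submodular on subsets of $\mathcal{M}$. *)

From HB Require Import structures.
From mathcomp Require Import all_boot all_order all_algebra.
Set Implicit Arguments. Unset Strict Implicit. Unset Printing Implicit Defensive.
Import Order.TTheory GRing.Theory Num.Theory.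
Local Open Scope ring_scope.

Definition dotp (R : realFieldType) (d : nat) (u v : 'rV[R]_d) : R :=
  \sum_(i < d) u 0 i * v 0 i.

(* Maximum of F over the nonempty finite type 'I_N (a0 witnesses nonemptiness;
   since max is idempotent the value does not depend on a0). *)
Definition maxI (R : realFieldType) (N : nat) (a0 : 'I_N) (F : 'I_N -> R) : R :=
  \big[Num.max/F a0]_(a : 'I_N) F a.

Definition mu (R : realFieldType) (d N H : nat) (x : 'I_H -> 'rV[R]_d)
  (theta : 'I_N -> 'rV[R]_d) (alpha : R) (lam : 'I_N -> R)
  (t : 'I_H) (a : 'I_N) (S : {set 'I_N}) : R :=
  dotp (theta a) (x t) - alpha * lam a * (a \notin S)%:R.

Definition fval (R : realFieldType) (d N H : nat) (a0 : 'I_N)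
  (x : 'I_H -> 'rV[R]_d) (theta : 'I_N -> 'rV[R]_d) (alpha : R)
  (lam : 'I_N -> R) (S : {set 'I_N}) : R :=
  \sum_(t < H) (maxI a0 (fun a => mu x theta alpha lam t a S)
                - maxI a0 (fun a => mu x theta alpha lam t a set0)).

Definition monotone_setfun (R : realFieldType) (T : finType) (f : {set T} -> R) :=
  forall S U : {set T}, S \subset U -> f S <= f U.

Definition submodular (R : realFieldType) (T : finType) (f : {set T} -> R) :=
  forall S U : {set T}, f (S :|: U) + f (S :&: U) <= f S + f U.

From HB Require Import structures.
From mathcomp Require Import all_boot all_order all_algebra.
Import Order.TTheory GRing.Theory Num.Theory.
Local Open Scope ring_scope.
Set Implicit Arguments. Unset Strict Implicit.

(* Each summand of [fval] is, up to a constant, the maximum over [a] of the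
   set functions [S |-> c_a - w_a * 1{a \notin S}] with [w_a >= 0].  These are
   maxitive, [g (S :|: U) = max (g S) (g U)], and maxitivity survives pointwise
   maxima and constant shifts.  A maxitive function is monotone and submodular,
   since [g (S :&: U) <= min (g S) (g U)] and [max + min = g S + g U]; both
   properties are stable under finite sums. *)

Definition maxitive (R : realFieldType) (T : finType) (f : {set T} -> R) :=
  forall S U : {set T}, f (S :|: U) = Num.max (f S) (f U).

Section SetFunctions.
Variables (R : realFieldType) (T : finType).
Implicit Types (f : {set T} -> R) (S U : {set T}).

Lemma maxitive_monotone f : maxitive f -> monotone_setfun f.
Proof. by move=> fmax S U /setUidPr <-; rewrite fmax le_max lexx. Qed.

Lemma maxitive_submodular f : maxitive f -> submodular f.
Proof.
move=> fmax S U; have fmono := maxitive_monotone fmax.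
rewrite fmax -[f S + f U](addr_max_min (f S)) lerD2l.
by rewrite le_min !fmono ?subsetIl ?subsetIr.
Qed.

Lemma maxitiveBr f c : maxitive f -> maxitive (fun S => f S - c).
Proof.
move=> fmax S U; rewrite fmax; case: (leP (f S) (f U)) => [le_SU | /ltW le_US].
  by rewrite !max_r // lerD2r.
by rewrite !max_l // lerD2r.
Qed.

Lemma monotone_setfun_sum (I : Type) (r : seq I) (P : pred I)
    (F : I -> {set T} -> R) :
  (forall i, P i -> monotone_setfun (F i)) ->
  monotone_setfun (fun S => \sum_(i <- r | P i) F i S).
Proof. by move=> Fmono S U sSU; apply: ler_sum => i Pi; apply: Fmono. Qed.

Lemma submodular_sum (I : Type) (r : seq I) (P : pred I)
    (F : I -> {set T} -> R) :
  (forall i, P i -> submodular (F i)) ->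
  submodular (fun S => \sum_(i <- r | P i) F i S).
Proof.
by move=> Fsub S U; rewrite -!big_split; apply: ler_sum => i Pi; apply: Fsub.
Qed.

End SetFunctions.

Section MaxOverOrdinals.
Variables (R : realFieldType) (N : nat) (a0 : 'I_N).

Lemma maxitive_penalty (a : 'I_N) (c w : R) : 0 <= w ->
  maxitive (fun S : {set 'I_N} => c - w * (a \notin S)%:R).
Proof.
move=> w_ge0 S U; rewrite in_setU negb_or.
have le_c : c - w <= c by rewrite gerBl.
by case: (a \in S); case: (a \in U); rewrite /= ?mulr0 ?mulr1 ?subr0 ?maxxx
  ?(max_l le_c) ?(max_r le_c).
Qed.

Lemma le_maxI (F : 'I_N -> R) a : F a <= maxI a0 F.
Proof. exact: le_bigmax. Qed.

Lemma maxI_le (F : 'I_N -> R) y : (forall a, F a <= y) -> maxI a0 F <= y.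
Proof. by move=> Fy; apply: bigmax_le. Qed.

Lemma monotone_setfun_maxI (F : 'I_N -> {set 'I_N} -> R) :
  (forall a, monotone_setfun (F a)) ->
  monotone_setfun (fun S => maxI a0 (fun a => F a S)).
Proof.
move=> Fmono S U sSU; apply: maxI_le => a.
exact: le_trans (Fmono a S U sSU) (le_maxI _ a).
Qed.

Lemma maxitive_maxI (F : 'I_N -> {set 'I_N} -> R) :
  (forall a, maxitive (F a)) -> maxitive (fun S => maxI a0 (fun a => F a S)).
Proof.
move=> Fmax S U; apply/eqP; rewrite eq_le; apply/andP; split.
  apply: maxI_le => a.
  by rewrite Fmax ge_max !le_max !le_maxI ?orbT.
have gmono := monotone_setfun_maxI (fun a => maxitive_monotone (Fmax a)).
by rewrite ge_max !gmono ?subsetUl ?subsetUr.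
Qed.

End MaxOverOrdinals.

Theorem lemmaC3 (R : realFieldType) (d N H : nat) (a0 : 'I_N)
  (x : 'I_H -> 'rV[R]_d) (theta : 'I_N -> 'rV[R]_d) (alpha : R)
  (lam : 'I_N -> R) :
  0 < alpha -> (forall a, 0 < lam a) ->
  monotone_setfun (fval a0 x theta alpha lam) /\
  submodular (fval a0 x theta alpha lam).
Proof.
move=> alpha_gt0 lam_gt0.
have mu_maxitive t a : maxitive (mu x theta alpha lam t a).
  by apply: maxitive_penalty; rewrite mulr_ge0 ?ltW.
have summand_maxitive t : maxitive (fun S =>
    maxI a0 (fun a => mu x theta alpha lam t a S)
    - maxI a0 (fun a => mu x theta alpha lam t a set0)).
  exact/maxitiveBr/maxitive_maxI.
split; [apply: monotone_setfun_sum | apply: submodular_sum] => t _.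
- exact: maxitive_monotone.
- exact: maxitive_submodular.
Qed.
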